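(* Let $G$ be a finite group and $p$ a prime. The weightings \[ k^H_{\mathcal S^*}=\sum_K\mu(H,K),\qquad k^H_{\mathcal T^*}=|G|^{-1}\sum_K\mu(H,K),\qquad k^H_{\mathcal O^*}=|G|^{-1}|H|\sum_K\mu(H,K) \] for $\mathcal S^*_G$, $\mathcal T^*_G$ and $\mathcal O^*_G$ respectively (sums over nonidentity $p$-subgroups $K$ of $G$) are supported on the nonidentity $p$-radical subgroups of $G$: they vanish at every nonidentity $p$-subgroup $H$ with $O_p(N_G(H)/H)\ne1$.
   Context: $N_G(H,K)=\{g\in G: g^{-1}Hg\le K\}$. Categories with objects the nonidentity $p$-subgroups of $G$ and composition induced by multiplication: $\mathcal S^*_G$ the poset under inclusion; $\mathcal T^*_G(H,K)=N_G(H,K)$; $\mathcal O^*_G(H,K)=N_G(H,K)/K$. A weighting of a finite category $\mathcal C$ is $k^\bullet:\mathrm{Ob}(\mathcal C)\to\mathbb Q$ with $\sum_b|\mathcal C(a,b)|k^b=1$ for every object $a$. $\mu(H,K)$ is the Möbius function of the poset of all subgroups of $G$ ($\mu(H,H)=1$, $\mu(H,K)=-\sum_{H\le L<K}\mu(H,L)$ for $H<K$, $0$ if $H\not\le K$). A $p$-subgroup $H$ is $p$-radical if $O_p(N_G(H)/H)=1$, where $O_p$ is the largest normal $p$-subgroup. *)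

From HB Require Import structures.
From mathcomp Require Import all_boot all_order all_algebra all_fingroup all_solvable.
Set Implicit Arguments. Unset Strict Implicit. Unset Printing Implicit Defensive.
Import GRing.Theory Num.Theory.
Local Open Scope group_scope.

Section Defs.
Variable gT : finGroupType.
Implicit Types (G H K L : {group gT}) (p : nat).

(* Objects of S*_G, T*_G, O*_G: the nonidentity p-subgroups of G. *)
Definition nid_psub G p (H : {group gT}) : bool :=
  [&& H \subset G, p.-group H & H != 1%G].

(* Implemented with fuel; fuel #|K| is sufficient since every L in the
   recursion satisfies #|L| < #|K|. *)
Fixpoint mobius_fuel (n : nat) G (H K : {group gT}) : rat :=
  match n with
  | 0 => 0
  | n'.+1 =>
      if (H :==: K) then 1
      else if (H \proper K) && (K \subset G) then
        - \sum_(L : {group gT} | (H \subset L) && (L \proper K)) mobius_fuel n' G H L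
      else 0
  end%R.

Definition mobius G (H K : {group gT}) : rat :=
  if (H \subset G) && (K \subset G) then mobius_fuel #|K| G H K else 0%R.

Definition transporter G (H K : {group gT}) : {set gT} :=
  [set g in G | H :^ g \subset K].

(* Sizes of hom-sets *)
Definition homS (H K : {group gT}) : nat := (H \subset K).
Definition homT G (H K : {group gT}) : nat := #|transporter G H K|.
Definition homO G (H K : {group gT}) : nat := #|lcosets K (transporter G H K)|.

Definition is_weighting (ob : pred {group gT}) (hom : {group gT} -> {group gT} -> nat)
  (k : {group gT} -> rat) : Prop :=
  forall a, ob a -> (\sum_(b : {group gT} | ob b) (hom a b)%:R * k b = 1)%R.

Definition kS G p (H : {group gT}) : rat :=
  \sum_(K : {group gT} | nid_psub G p K) mobius G H K.
Definition kT G p (H : {group gT}) : rat := ((#|G|%:R)^-1 * kS G p H)%R.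
Definition kO G p (H : {group gT}) : rat := ((#|G|%:R)^-1 * #|H|%:R * kS G p H)%R.

Definition p_radical G p (H : {group gT}) : bool := 'O_p('N_G(H) / H) == 1.
End Defs.

From mathcomp Require Import all_boot all_order all_algebra all_fingroup all_solvable.
From mathcomp Require Import zify.
Import GRing.Theory Num.Theory.
Set Implicit Arguments. Unset Strict Implicit. Unset Printing Implicit Defensive.
Local Open Scope group_scope.

(* The weighting identities hold because the Moebius function is a two-sided
   inverse of the zeta function of the subgroup poset; for T* one averages the
   identity for S* over conjugation by G, and O* differs from T* by the factor
   |K| = |N_G(H,K)| / |O*(H,K)|.
   For the vanishing at a non-radical H, let Q > H be the preimage of
   O_p(N_G(H)/H).  A p-subgroup K that does not normalise H has mu(H,K) = 0:
   normalisers grow in the nilpotent group K, so by induction only the L below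
   N_K(H) > H survive in the recursion for mu(H,K), and they sum to zero.  The
   remaining K are the p-subgroups of N_G(H) above H, on which K |-> KQ is a
   closure operator; each of its fibres sums to zero, since every closed
   element contains Q and hence differs from H. *)

Lemma eqG_subset (gT : finGroupType) (H K : {group gT}) :
  (H == K) = (H \subset K) && (K \subset H).
Proof. by rewrite -val_eqE eqEsubset. Qed.

Lemma properG_neq (gT : finGroupType) (H K : {group gT}) :
  H \proper K = (H != K) && (H \subset K).
Proof. by rewrite properEneq val_eqE. Qed.

Section SubgroupInterval.
Variables (gT : finGroupType) (R : nmodType) (F : {group gT} -> R).
Implicit Types H K : {group gT}.
Local Open Scope ring_scope.

Lemma sum_interval_nsub H K : ~~ (H \subset K) ->
  \sum_(L : {group gT} | (H \subset L) && (L \subset K)) F L = 0.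
Proof.
move=> nHK; apply: big_pred0 => L; apply: contraNF nHK => /andP[HL LK].
exact: subset_trans LK.
Qed.

Lemma sum_interval1 H : \sum_(L : {group gT} | (H \subset L) && (L \subset H)) F L = F H.
Proof. by apply: big_pred1 => L; rewrite /= eqG_subset andbC. Qed.

End SubgroupInterval.

Section Mobius.
Variables (gT : finGroupType) (G : {group gT}).
Implicit Types H K L : {group gT}.
Local Open Scope ring_scope.

Lemma mobius_fuelS n H K : mobius_fuel n.+1 G H K =
  if H :==: K then 1
  else if (H \proper K) && (K \subset G) then
    - \sum_(L : {group gT} | (H \subset L) && (L \proper K)) mobius_fuel n G H L
  else 0.
Proof. by []. Qed.

Lemma mobius_fuel_enough n m H K : (#|K| <= n)%N -> (#|K| <= m)%N ->
  mobius_fuel n G H K = mobius_fuel m G H K.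
Proof.
elim: n m K => [|n IH] [|m] K; rewrite ?leqn0 ?(gtn_eqF (cardG_gt0 K)) // => Kn Km.
rewrite !mobius_fuelS.
case: eqP => //= _; case: ifP => // _; congr (- _).
apply: eq_bigr => L /andP[_ ltLK].
by apply: IH; rewrite -ltnS (leq_trans (proper_card ltLK)).
Qed.

Lemma mobius_proper H K : H \subset G -> K \subset G -> H \proper K ->
  mobius G H K = - \sum_(L : {group gT} | (H \subset L) && (L \proper K)) mobius G H L.
Proof.
move=> HG KG ltHK.
rewrite {1}/mobius HG KG -(prednK (cardG_gt0 K)) mobius_fuelS ltHK KG.
case: eqP => [eHK|_]; first by rewrite eHK properxx in ltHK.
congr (- _); apply: eq_bigr => L /andP[HL ltLK].
rewrite /mobius HG (subset_trans (proper_sub ltLK) KG) /=.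
by apply: mobius_fuel_enough => //; rewrite -ltnS prednK ?cardG_gt0 ?proper_card.
Qed.

Lemma mobius_id H : H \subset G -> mobius G H H = 1.
Proof. by move=> HG; rewrite /mobius HG -(prednK (cardG_gt0 H)) mobius_fuelS eqxx. Qed.

Lemma mobius_eq0 H K : ~~ (H \subset K) -> mobius G H K = 0.
Proof.
move=> nHK; rewrite /mobius; case: andP => // _; case: #|K| => // n.
rewrite mobius_fuelS.
case: eqP => [eHK|_]; first by rewrite eHK subxx in nHK.
by rewrite properE (negbTE nHK).
Qed.

Lemma mobius_zeta H K : H \subset G -> K \subset G ->
  \sum_(L : {group gT} | (H \subset L) && (L \subset K)) mobius G H L = (H == K)%:R.
Proof.
move=> HG KG; have [HK|nHK] := boolP (H \subset K); last first.
  by rewrite sum_interval_nsub //; case: eqP => // eHK; rewrite eHK subxx in nHK.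
have [<-|neHK] := eqVneq H K; first by rewrite sum_interval1 mobius_id.
have ltHK : H \proper K by rewrite properG_neq neHK.
rewrite (bigD1 K) /= ?HK ?subxx // mobius_proper // addrC.
rewrite (eq_bigl (fun L : {group gT} => (H \subset L) && (L \proper K))) ?subrr // => L.
by rewrite properG_neq -andbA [(L != K) && _]andbC.
Qed.

Lemma zeta_mobius H K : H \subset G -> K \subset G ->
  \sum_(L : {group gT} | (H \subset L) && (L \subset K)) mobius G L K = (H == K)%:R.
Proof.
move=> + KG; have [n] := ubnP (#|K| - #|H|)%N; elim: n H => // n IH H ltKHn HG.
have [HK|nHK] := boolP (H \subset K); last first.
  by rewrite sum_interval_nsub //; case: eqP => // eHK; rewrite eHK subxx in nHK.
have [<-|neHK] := eqVneq H K; first by rewrite sum_interval1 mobius_id.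
pose rho (X : {group gT}) := \sum_(L : {group gT} | (X \subset L) && (L \subset K)) mobius G L K.
have rho_above L : H \proper L -> L \subset K -> rho L = (L == K)%:R.
  move=> ltHL LK; apply: IH; last exact: subset_trans LK KG.
  by have := proper_card ltHL; have := subset_leq_card LK; lia.
(* Evaluate mu * zeta * mu at (H, K) in both ways: by the left inverse law,
   and by induction (rho L = [L == K] strictly above H). *)
have expand_left : \sum_(L : {group gT} | (H \subset L) && (L \subset K)) mobius G H L * rho L
    = mobius G H K.
  under eq_bigr do rewrite big_distrr.
  rewrite (exchange_big_dep (fun J : {group gT} => (H \subset J) && (J \subset K))) /=; last first.
    by move=> L J /andP[HL _] /andP[LJ JK]; rewrite (subset_trans HL LJ).
  transitivity (\sum_(J : {group gT} | (H \subset J) && (J \subset K))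
                  (H == J)%:R * mobius G J K).
    apply: eq_bigr => J /andP[HJ JK].
    rewrite -big_distrl -(mobius_zeta HG (subset_trans JK KG)); congr (_ * _).
    apply: eq_bigl => L; apply/andP/andP=> [[/andP[-> _] /andP[-> _]] // | [HL LJ]].
    by rewrite HL LJ (subset_trans LJ JK).
  rewrite (bigD1 H) ?subxx ?HK //= eqxx mul1r big1 ?addr0 // => J /andP[_ neJH].
  by rewrite eq_sym (negbTE neJH) mul0r.
have expand_right : \sum_(L : {group gT} | (H \subset L) && (L \subset K)) mobius G H L * rho L
    = rho H + mobius G H K.
  rewrite (bigD1 H) ?subxx ?HK //= mobius_id // mul1r; congr (_ + _).
  have rhoK : rho K = 1 by rewrite rho_above ?eqxx ?subxx // properG_neq neHK.
  rewrite (bigD1 K) ?HK ?subxx ?(eq_sym K) //= rhoK mulr1 big1 ?addr0 //.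
  move=> L /andP[/andP[/andP[HL LK] neLH] neLK].
  by rewrite rho_above ?(negbTE neLK) ?mulr0 // properG_neq eq_sym neLH.
change (rho H = 0); apply: (addIr (mobius G H K)).
by rewrite -expand_right expand_left add0r.
Qed.

Lemma mobius_nil_eq0 H K : H \subset G -> K \subset G -> nilpotent K ->
  ~~ (K \subset 'N(H)) -> mobius G H K = 0.
Proof.
move=> HG; have [n] := ubnP #|K|; elim: n K => // n IH K ltKn KG nilK nKH.
have [HK|nHK] := boolP (H \subset K); last exact: mobius_eq0.
have ltHK : H \proper K.
  by rewrite properEneq HK andbT; apply: contraNneq nKH => <-; apply: normG.
have ltNK : 'N_K(H) \proper K.
  by rewrite properEneq subsetIl andbT; apply: contraNneq nKH => <-; apply: subsetIr.
have neHN : H != 'N_K(H)%G.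
  rewrite -val_eqE; have := nilpotent_proper_norm nilK ltHK.
  by rewrite properEneq => /andP[].
rewrite mobius_proper // (bigID (fun L : {group gT} => L \subset 'N_K(H))) /=.
rewrite [X in _ + X]big1 ?addr0 => [|L /andP[/andP[_ ltLK] nLN]]; last first.
  have LK := proper_sub ltLK.
  apply: IH; rewrite ?(subset_trans LK KG) ?(nilpotentS LK nilK) //.
    exact: leq_trans (proper_card ltLK) _.
  by apply: contra nLN => LN; rewrite subsetI LK.
rewrite (eq_bigl (fun L : {group gT} => (H \subset L) && (L \subset 'N_K(H)%G))) => [|L].
  by rewrite mobius_zeta ?(subset_trans (subsetIl _ _) KG) // (negbTE neHN) oppr0.
rewrite -andbA; apply: andb_id2l => _.
by apply/andP/idP=> [[] // | LN]; rewrite LN (sub_proper_trans LN ltNK).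
Qed.

End Mobius.

Section JoinClosure.
Variables (gT : finGroupType) (G H Q : {group gT}) (Y : pred {group gT}).
Hypotheses (HG : H \subset G) (nQH : ~~ (Q \subset H)).
Hypothesis Y_interval : forall K, Y K -> (H \subset K) && (K \subset G).
Hypothesis Y_down : forall Z K : {group gT}, Y Z -> H \subset K -> K \subset Z -> Y K.
Hypothesis Y_join : forall K, Y K -> Y (K <*> Q)%G.
Local Open Scope ring_scope.

Lemma sum_mobius_join_fibre (Z : {group gT}) : Y Z -> Q \subset Z ->
  \sum_(K : {group gT} | Y K && ((K <*> Q)%G == Z)) mobius G H K = 0.
Proof.
have [n] := ubnP #|Z|; elim: n Z => // n IH Z ltZn YZ QZ.
have /andP[HZ ZG] := Y_interval YZ.
have interval0 : \sum_(K : {group gT} | (H \subset K) && (K \subset Z)) mobius G H K = 0.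
  rewrite mobius_zeta //; case: eqP => // eHZ.
  by move: nQH; rewrite eHZ QZ.
rewrite (eq_bigl (fun K : {group gT} => Y K && ((K <*> Q)%G \subset Z))) in interval0; last first.
  move=> K; rewrite join_subG QZ andbT.
  apply/andP/andP=> [[HK KZ] | [/Y_interval/andP[-> _] -> //]].
  by split=> //; apply: Y_down HK KZ.
rewrite (partition_big (fun K : {group gT} => (K <*> Q)%G)
           (fun W : {group gT} => [&& Y W, Q \subset W & W \subset Z])) /= in interval0;
  last by move=> K /andP[/Y_join-> ->]; rewrite joing_subr.
rewrite (bigD1 Z) /= ?YZ ?QZ ?subxx // [X in _ + X]big1 ?addr0 in interval0.
  rewrite -[RHS]interval0; apply: eq_bigl => K.
  case: eqP => [eKZ | _]; rewrite ?andbF //.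
  by rewrite join_subG QZ -eKZ joing_subl !andbT.
move=> W /andP[/and3P[YW QW WZ] neWZ]; rewrite -[RHS](IH W) //; last first.
  have ltWZ : W \proper Z by rewrite properG_neq neWZ.
  exact: leq_trans (proper_card ltWZ) ltZn.
apply: eq_bigl => K; case: eqP => [eKW | _]; rewrite ?andbF //.
have KW : K \subset W by rewrite -eKW joing_subl.
by rewrite join_subG QZ (subset_trans KW WZ) !andbT.
Qed.

Lemma sum_mobius_join_closed : \sum_(K : {group gT} | Y K) mobius G H K = 0.
Proof.
rewrite (partition_big (fun K : {group gT} => (K <*> Q)%G)
                      (fun W : {group gT} => Y W && (Q \subset W))) /=;
  last by move=> K YK; rewrite Y_join // joing_subr.
by apply: big1 => W /andP[YW QW]; apply: sum_mobius_join_fibre.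
Qed.

End JoinClosure.

Lemma subG_neq1 (gT : finGroupType) (H K : {group gT}) :
  H \subset K -> H != 1%G -> K != 1%G.
Proof.
move=> HK; apply: contra => /eqP eK1; rewrite eK1 in HK.
by apply/eqP; apply/trivGP.
Qed.

Section NonRadical.
Variables (gT : finGroupType) (p : nat) (G H : {group gT}).
Hypotheses (HG : H \subset G) (pH : p.-group H).
Local Open Scope ring_scope.

Let N := 'N_G(H)%G.
Let Q := (coset H @*^-1 'O_p(N / H))%G.

Let nsQN : Q <| N.
Proof.
by rewrite /Q -[X in _ <| X](quotientGK (normalSG HG)) cosetpre_normal pcore_normal.
Qed.

Let pQ : p.-group Q.
Proof.
have nHQ : Q \subset 'N(H) := subset_trans (normal_sub nsQN) (subsetIr _ _).
by rewrite -(pquotient_pgroup pH nHQ) /Q cosetpreK pcore_pgroup.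
Qed.

Let nsubQH : ~~ p_radical G p H -> ~~ (Q \subset H).
Proof.
move=> nrad; apply: contra nrad => sQH.
by have := quotientS H sQH; rewrite /Q cosetpreK trivg_quotient subG1.
Qed.

Lemma kS_nradical_eq0 : H != 1%G -> ~~ p_radical G p H -> kS G p H = 0.
Proof.
move=> ntH nrad; pose Y (K : {group gT}) := [&& H \subset K, K \subset N & p.-group K].
have NG : N \subset G := subsetIl _ _.
have kS_Y : kS G p H = \sum_(K : {group gT} | Y K) mobius G H K.
  rewrite /kS (bigID Y) /= [X in _ + X]big1 ?addr0 => [|K /andP[/and3P[KG pK _] nYK]].
    apply: eq_bigl => K; apply: andb_idl => /and3P[HK KN pK].
    by rewrite /nid_psub (subset_trans KN NG) pK (subG_neq1 HK ntH).
  have [HK|nHK] := boolP (H \subset K); last exact: mobius_eq0.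
  apply: mobius_nil_eq0 (pgroup_nil pK) _ => //.
  by apply: contra nYK => nKH; rewrite /Y HK pK subsetI KG nKH.
rewrite kS_Y; apply: (sum_mobius_join_closed HG (nsubQH nrad)) => [K|Z K|K].
- by case/and3P=> HK KN _; rewrite HK (subset_trans KN NG).
- by case/and3P=> _ ZN pZ HK KZ; rewrite /Y HK (subset_trans KZ ZN) (pgroupS KZ pZ).
- case/and3P=> HK KN pK; have nQK := subset_trans KN (normal_norm nsQN).
  rewrite /Y /= join_subG KN (normal_sub nsQN) (subset_trans HK (joing_subl _ _)).
  by rewrite norm_joinEl // pgroupM pK pQ.
Qed.

End NonRadical.

Lemma card_lcosets_mulr (gT : finGroupType) (A : {set gT}) (B : {group gT}) :
  A * B \subset A -> (#|lcosets B A| * #|B|)%N = #|A|.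
Proof.
move=> sABA; rewrite -[RHS]sum1_card (partition_big_imset (lcoset B)) /=.
rewrite -sum_nat_const; apply: eq_bigr => _ /imsetP[x Ax ->].
rewrite -(card_lcoset B x) -sum1_card; apply: eq_bigl => y; rewrite !lcosetE.
apply/idP/andP => [xBy | [_ /eqP <-]]; last exact: lcoset_refl.
split; last exact/eqP/lcoset_eqP.
by apply: (subsetP sABA); case/lcosetP: xBy => b Bb ->; apply: mem_mulg.
Qed.

Section Weightings.
Variables (gT : finGroupType) (G : {group gT}) (p : nat).
Implicit Types a b : {group gT}.
Local Open Scope ring_scope.

Lemma homT_sum a b : homT G a b = (\sum_(g in G) homS (a :^ g)%G b)%N.
Proof.
rewrite /homT -sum1_card big_mkcond [RHS]big_mkcond; apply: eq_bigr => g _.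
by rewrite /transporter inE /homS /=; case: (g \in G); case: (_ \subset _).
Qed.

Lemma homO_mul_card a b : b \subset G -> (homO G a b * #|b|)%N = homT G a b.
Proof.
move=> bG; apply: card_lcosets_mulr; apply/subsetP => _ /mulsgP[x y Tx By ->].
move: Tx; rewrite !inE => /andP[Gx axb]; rewrite groupM ?(subsetP bG y By) //=.
by rewrite conjsgM -(conjGid By) conjSg.
Qed.

Lemma nid_psubJ a g : nid_psub G p a -> g \in G -> nid_psub G p (a :^ g)%G.
Proof.
case/and3P=> aG pa nta Gg; rewrite /nid_psub /= -(conjGid Gg) conjSg aG pgroupJ pa.
by rewrite -val_eqE /= conjsg_eq1; rewrite -val_eqE /= in nta.
Qed.

Lemma sum_homS_mobius a K : nid_psub G p a -> nid_psub G p K ->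
  \sum_(b | nid_psub G p b) (homS a b)%:R * mobius G b K = (a == K)%:R.
Proof.
case/and3P=> aG _ nta /and3P[KG pK _]; rewrite -(zeta_mobius aG KG).
rewrite big_mkcond [RHS]big_mkcond; apply: eq_bigr => b _; rewrite /homS.
have [ab|nab] := boolP (a \subset b) => /=; last by rewrite mul0r if_same.
rewrite mul1r; have [bK|nbK] := boolP (b \subset K); last by rewrite mobius_eq0 // if_same.
by rewrite /nid_psub (subset_trans bK KG) (pgroupS bK pK) (subG_neq1 ab nta).
Qed.

Lemma kS_weighting : is_weighting (nid_psub G p) (@homS gT) (kS G p).
Proof.
move=> a nid_a; rewrite /kS; under eq_bigr do rewrite big_distrr.
rewrite exchange_big /= (eq_bigr _ (fun K nid_K => sum_homS_mobius nid_a nid_K)).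
rewrite (bigD1 a) //= eqxx big1 ?addr0 // => K /andP[_ neKa].
by rewrite eq_sym (negbTE neKa).
Qed.

Lemma kT_weighting : is_weighting (nid_psub G p) (homT G) (kT G p).
Proof.
move=> a nid_a.
under eq_bigr do rewrite homT_sum natr_sum big_distrl /=.
rewrite exchange_big /= (eq_bigr (fun=> (#|G|%:R)^-1 : rat)) => [|g Gg].
  by rewrite sumr_const -(mulr_natr (#|G|%:R)^-1) mulVf // pnatr_eq0 -lt0n cardG_gt0.
rewrite -[RHS]mulr1 -[X in _ = _ * X](kS_weighting (nid_psubJ nid_a Gg)) big_distrr /=.
by apply: eq_bigr => b _; rewrite /kT mulrCA.
Qed.

Lemma kO_weighting : is_weighting (nid_psub G p) (homO G) (kO G p).
Proof.
move=> a nid_a; rewrite -[RHS](kT_weighting nid_a).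
apply: eq_bigr => b /and3P[bG _ _].
rewrite /kO /kT -(homO_mul_card a bG) natrM -!mulrA; congr (_ * _).
by rewrite mulrCA.
Qed.

End Weightings.

Theorem corollary3p10 (gT : finGroupType) (G : {group gT}) (p : nat) :
  prime p ->
  [/\ is_weighting (nid_psub G p) (@homS gT) (kS G p),
      is_weighting (nid_psub G p) (homT G) (kT G p),
      is_weighting (nid_psub G p) (homO G) (kO G p)
    & forall H : {group gT}, nid_psub G p H -> ~~ p_radical G p H ->
        [/\ kS G p H = 0%R, kT G p H = 0%R & kO G p H = 0%R]].
Proof.
move=> _; split; [exact: kS_weighting | exact: kT_weighting | exact: kO_weighting |].
move=> H /and3P[HG pH ntH] nrad.
by rewrite /kT /kO (kS_nradical_eq0 HG pH ntH nrad) !mulr0.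
Qed.
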